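(* Let $\mathbf{V}$ be a finite set of random variables containing a target variable $T$, and let $\mathbf{F} = \mathbf{V} \setminus \{T\}$ be the set of features. Suppose the joint distribution $P$ of $\mathbf{V}$ can be faithfully represented by a Bayesian network, and suppose the algorithm PFBP (described in the context) has access to a conditional independence oracle for $P$ and imposes no limit on the number of selected features. Then PFBP run with two Runs returns the Markov blanket of $T$.
   Context: Notation: $\mathbf{X} \perp T \mid \mathbf{S}$ denotes conditional independence of $\mathbf{X}$ and $T$ given $\mathbf{S}$ under $P$. A Markov blanket of $T$ with respect to $\mathbf{V}$ is a minimal set $\mathbf{S} \subseteq \mathbf{F}$ such that $(\mathbf{V}\setminus(\mathbf{S}\cup\{T\})) \perp T \mid \mathbf{S}$; for distributions faithful to a Bayesian network it is unique. A Bayesian network is a pair $\langle G, P\rangle$ with $G$ a DAG over $\mathbf{V}$ satisfying the Markov condition (each variable is independent of its non-descendants given its parents); $P$ is faithful to $G$ if all and only the conditional independencies of $P$ are those entailed by the Markov condition (equivalently, by d-separation in $G$); $P$ can be faithfully represented by a Bayesian network if such a $G$ exists. The PFBP algorithm with an independence oracle (Parallel Forward-Backward with Pruning, with Early Dropping) operates as follows. Initially the selected set is $\mathbf{S} = \emptyset$. It performs Runs, up to a maximum number maxRuns of Runs, stopping early if a Run leaves $\mathbf{S}$ unchanged. Each Run consists of: (1) set the remaining set $\mathbf{R} = \mathbf{F} \setminus \mathbf{S}$; (2) forward phase: repeat iterations in which every $X \in \mathbf{R}$ with $X \perp T \mid \mathbf{S}$ is removed from $\mathbf{R}$ (Early Dropping),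 and then, if some $X \in \mathbf{R}$ is conditionally dependent on $T$ given $\mathbf{S}$, one such variable (the best-ranked one) is added to $\mathbf{S}$ and removed from $\mathbf{R}$; the forward phase ends when no variable is added; (3) backward phase: repeatedly, if some $X \in \mathbf{S}$ satisfies $X \perp T \mid \mathbf{S}\setminus\{X\}$, remove one such variable from $\mathbf{S}$; stop when no variable can be removed. The output is $\mathbf{S}$. *)

From mathcomp Require Import all_boot.
Set Implicit Arguments. Unset Strict Implicit. Unset Printing Implicit Defensive.

Section DSep.
Variable V : finType.
Variable edge : rel V.

Definition acyclic : Prop := forall x y, edge x y -> ~~ connect edge y x.

Definition adj : rel V := fun a b => edge a b || edge b a.

Definition collider (a b c : V) : bool := edge a b && edge c b.

Definition triple_active (Z : {set V}) (a b c : V) : bool :=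
  if collider a b c then [exists d in Z, connect edge b d]
  else b \notin Z.

Fixpoint triples_active (Z : {set V}) (a b : V) (rest : seq V) : bool :=
  match rest with
  | [::] => true
  | c :: rest' => triple_active Z a b c && triples_active Z b c rest'
  end.

Definition active_path (Z : {set V}) (x : V) (p : seq V) : bool :=
  [&& path adj x p, uniq (x :: p) &
      (if p is b :: rest then triples_active Z x b rest else true)].

Definition d_connected (Z : {set V}) (x y : V) : Prop :=
  exists p, active_path Z x p /\ last x p = y.

Definition d_separated (X Y Z : {set V}) : Prop :=
  forall x y, x \in X -> y \in Y -> ~ d_connected Z x y.
End DSep.

(* Indep X Y Z  stands for  X _||_ Y | Z  under P (the CI oracle).      *)
Section PFBP.
Variable V : finType.
Variable T : V.
Variable Indep : {set V} -> {set V} -> {set V} -> bool.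

(* P can be faithfully represented by a Bayesian network: there is a DAG G
   whose d-separation statements are exactly the CI statements of P
   (Markov condition + faithfulness), for disjoint triples. *)
Definition faithful_BN : Prop :=
  exists edge : rel V, acyclic edge /\
    forall X Y Z : {set V},
      [disjoint X & Y] -> [disjoint X & Z] -> [disjoint Y & Z] ->
      (Indep X Y Z <-> d_separated edge X Y Z).

Definition features : {set V} := ~: [set T].

Definition ci (X : V) (S : {set V}) : bool := Indep [set X] [set T] S.

Definition mb_property (S : {set V}) : bool :=
  Indep (~: (T |: S)) [set T] S.

Definition markov_blanket (S : {set V}) : Prop :=
  [/\ S \subset features, mb_property S &
      forall S' : {set V}, S' \proper S -> ~~ mb_property S'].

Definition early_drop (S R : {set V}) : {set V} := [set X in R | ~~ ci X S].

(* The choice of the added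
   variable (the "best-ranked" one) is arbitrary: all choices are covered. *)
Inductive forward : {set V} -> {set V} -> {set V} -> Prop :=
| fwd_stop (S R : {set V}) : early_drop S R = set0 -> forward S R S
| fwd_add (S R : {set V}) (X : V) (Sout : {set V}) :
    X \in early_drop S R ->
    forward (X |: S) (early_drop S R :\ X) Sout -> forward S R Sout.

(* backward phase, again with arbitrary choice of the removed variable *)
Inductive backward : {set V} -> {set V} -> Prop :=
| bwd_stop (S : {set V}) : (forall X, X \in S -> ~~ ci X (S :\ X)) -> backward S S
| bwd_remove (S : {set V}) (X : V) (Sout : {set V}) :
    X \in S -> ci X (S :\ X) -> backward (S :\ X) Sout -> backward S Sout.

Definition run (S S' : {set V}) : Prop :=
  exists S1, forward S (features :\: S) S1 /\ backward S1 S'.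

Fixpoint pfbp (n : nat) (S Sout : {set V}) : Prop :=
  match n with
  | 0 => Sout = S
  | n'.+1 => exists S', run S S' /\
      (if S' == S then Sout = S else pfbp n' S' Sout)
  end.
End PFBP.

(* Under faithfulness, [X _||_ T | Z] holds exactly when [Z] d-separates [X]
   from [T]. A parent or child of [T] is d-connected to [T] given every set,
   so the first forward phase selects all of them and no backward phase can
   remove them. Once every parent and child is selected, a spouse of [T] is
   d-connected to [T] through the common child, so the forward phase of the
   second Run selects the whole Markov blanket; every active path into [T]
   enters through a member of the blanket, so given a superset of the blanket
   every other feature is independent of [T], and the backward phase removes
   exactly those features. *)
From mathcomp Require Import all_boot.
Set Implicit Arguments. Unset Strict Implicit. Unset Printing Implicit Defensive.

Section Graph.
Variables (V : finType) (edge : rel V).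
Hypothesis edge_acyclic : acyclic edge.

Lemma edge_irrefl x : ~~ edge x x.
Proof. by apply/negP => /edge_acyclic; rewrite connect0. Qed.

Lemma edge_asym x y : edge x y -> ~~ edge y x.
Proof. by move=> exy; apply/negP => /edge_acyclic; rewrite connect1. Qed.

Lemma adj_neq x y : adj edge x y -> x != y.
Proof. by apply: contraTneq => ->; rewrite /adj orbb edge_irrefl. Qed.

Lemma adj_d_connected (Z : {set V}) x y : adj edge x y -> d_connected edge Z x y.
Proof.
move=> axy; exists [:: y]; split=> //.
by rewrite /active_path /= axy !inE adj_neq.
Qed.

Lemma collider_d_connected (Z : {set V}) x y c :
  edge x c -> edge y c -> c \in Z -> x != y -> d_connected edge Z x y.
Proof.
move=> exc eyc cZ neq_xy; exists [:: c; y]; split=> //.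
have neq_xc : x != c by apply: contraTneq exc => ->; rewrite edge_irrefl.
have neq_cy : c != y by apply: contraTneq eyc => <-; rewrite edge_irrefl.
rewrite /active_path /= /adj exc eyc orbT !inE negb_or neq_xc neq_xy neq_cy /=.
rewrite /triple_active /collider exc eyc andbT.
by apply/existsP; exists c; rewrite cZ connect0.
Qed.

Variable T : V.

Definition pc_set : {set V} := [set y | adj edge y T].

Definition mb_set : {set V} :=
  [set y | (y != T) && (adj edge y T || [exists c, edge T c && edge y c])].

Lemma pc_sub_mb : pc_set \subset mb_set.
Proof.
apply/subsetP => y; rewrite !inE => ayT.
by rewrite ayT andbT adj_neq.
Qed.

Lemma pc_neq y : y \in pc_set -> y != T.
Proof. by rewrite inE => /adj_neq. Qed.

Lemma mb_sub_features : mb_set \subset features T.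
Proof. by apply/subsetP => y; rewrite !inE => /andP[]. Qed.

(* The second conjunct is the induction invariant: unless [a] is adjacent to
   [T], the edge between [a] and [b] points away from [a]. *)
Lemma active_triples_to_T (Z : {set V}) : mb_set \subset Z -> forall rest a b,
  triples_active edge Z a b rest -> path (adj edge) a (b :: rest) ->
  uniq [:: a, b & rest] -> last b rest = T ->
  (a \in Z) && ((rest == [::]) || edge a b).
Proof.
move=> mbZ; elim=> [|c rest IHrest] a b /=.
  move=> _ /andP[abT _] uniq_ab eq_bT; subst b.
  rewrite andbT; apply: (subsetP mbZ); rewrite inE abT andbT.
  by move: uniq_ab; rewrite !inE andbT.
move=> /andP[act_abc act_rest] /andP[adj_ab path_rest] uniq_abc last_rest.
have uniq_bc : uniq [:: b, c & rest] by case/andP: uniq_abc.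
have /andP[bZ] := IHrest b c act_rest path_rest uniq_bc last_rest.
move: act_abc; rewrite /triple_active.
case col: (collider edge a b c); last by rewrite bZ.
case/andP: col => eab ecb _ /orP[/eqP rest0|ebc].
  2: by rewrite (negPf (edge_asym ebc)) in ecb.
subst rest; move: last_rest => /= eq_cT; subst c.
rewrite eab andbT; apply: (subsetP mbZ); rewrite inE.
move: uniq_abc; rewrite !inE negb_or => /andP[/andP[_ ->] _] /=.
by apply/orP; right; apply/existsP; exists b; rewrite ecb eab.
Qed.

Lemma mb_d_separated (Z : {set V}) x : mb_set \subset Z -> x \notin Z -> x != T ->
  ~ d_connected edge Z x T.
Proof.
move=> mbZ xZ neq_xT [[|b rest] [/and3P[path_p uniq_p act_p] last_p]].
  by move: neq_xT; rewrite -last_p eqxx.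
have /andP[xZ' _] := active_triples_to_T mbZ act_p path_p uniq_p last_p.
by rewrite xZ' in xZ.
Qed.

End Graph.

Section Algorithm.
Variables (V : finType) (T : V) (Indep : {set V} -> {set V} -> {set V} -> bool).

Lemma features_notT (S : {set V}) : S \subset features T -> T \notin S.
Proof. by move=> SF; apply/negP => /(subsetP SF); rewrite !inE eqxx. Qed.

Lemma early_drop_sub S R : early_drop T Indep S R \subset R.
Proof. by apply/subsetP => y; rewrite inE => /andP[]. Qed.

Lemma forward_total S R : exists Sout, forward T Indep S R Sout.
Proof.
have [n] := ubnP #|R|; elim: n S R => // n IHn S R ltRn.
have [D0|[X XD]] := set_0Vmem (early_drop T Indep S R).
  by exists S; apply: fwd_stop.
have ltDn : #|early_drop T Indep S R :\ X| < n.
  have ltDR : #|early_drop T Indep S R :\ X| < #|R|.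
    apply: leq_trans (subset_leq_card (early_drop_sub S R)).
    by rewrite (cardsD1 X (early_drop T Indep S R)) XD.
  exact: leq_trans ltDR ltRn.
have [Sout fwd] := IHn (X |: S) _ ltDn.
by exists Sout; apply: fwd_add XD fwd.
Qed.

Lemma backward_total S : exists Sout, backward T Indep S Sout.
Proof.
have [n] := ubnP #|S|; elim: n S => // n IHn S ltSn.
case: (pickP [pred X | (X \in S) && ci T Indep X (S :\ X)]) => [X /andP[XS ciX]|none].
  have ltS'n : #|S :\ X| < n by move: ltSn; rewrite (cardsD1 X S) XS.
  have [Sout bwd] := IHn _ ltS'n.
  by exists Sout; apply: bwd_remove XS ciX bwd.
by exists S; apply: bwd_stop => X XS; move: (none X); rewrite /= XS => /negbT.
Qed.

Lemma run_total S : exists S', run T Indep S S'.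
Proof.
have [S1 fwd] := forward_total S (features T :\: S).
have [S2 bwd] := backward_total S1.
by exists S2, S1.
Qed.

Lemma pfbp_total n S : exists Sout, pfbp T Indep n S Sout.
Proof.
elim: n S => [|n IHn] S; first by exists S.
have [S' runS'] := run_total S.
have [Sout pfbpS'] := IHn S'.
by exists (if S' == S then S else Sout), S'; split=> //; case: eqP.
Qed.

Lemma forward_sub_features S R Sout : forward T Indep S R Sout ->
  S \subset features T -> R \subset features T -> Sout \subset features T.
Proof.
elim=> // {}S {}R X {}Sout XD _ IH SF RF.
have DF := subset_trans (early_drop_sub S R) RF.
apply: IH; last exact: subset_trans (subD1set _ _) DF.
by rewrite subUset SF sub1set (subsetP DF).
Qed.

Lemma forward_keeps (K : {set V}) S R Sout : forward T Indep S R Sout ->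
  (forall (S' : {set V}) y, S \subset S' -> T \notin S' -> y \in K -> y \notin S' ->
     ~~ ci T Indep y S') ->
  K \subset S :|: R -> T \notin S -> R \subset features T -> K \subset Sout.
Proof.
elim=> [{}S {}R D0|{}S {}R X {}Sout XD _ IH] depK KSR TS RF.
  apply/subsetP => y yK; case/setUP: (subsetP KSR y yK) => // yR.
  apply/negPn/negP => yS.
  have : y \in early_drop T Indep S R by rewrite inE yR depK.
  by rewrite D0 inE.
have XR : X \in R by apply: (subsetP (early_drop_sub S R)).
apply: IH.
- by move=> S' y /(subset_trans (subsetUr _ _)); apply: depK.
- apply/subsetP => y yK; rewrite !inE.
  have [//|_] := eqVneq y X; rewrite /=.
  case/setUP: (subsetP KSR y yK) => [-> //|yR].
  have [//|yS] := boolP (y \in S).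
  by rewrite yR depK.
- by rewrite in_setU1 negb_or TS andbT; apply: contraNneq (features_notT RF) => ->.
- exact: subset_trans (subD1set _ _) (subset_trans (early_drop_sub S R) RF).
Qed.

Lemma backward_sub S Sout : backward T Indep S Sout -> Sout \subset S.
Proof.
elim=> // {}S X {}Sout _ _ _ IH.
exact: subset_trans IH (subD1set _ _).
Qed.

Lemma backward_keeps (K : {set V}) S Sout : backward T Indep S Sout ->
  K \subset S ->
  (forall (S' : {set V}) y, S' \subset S -> K \subset S' -> y \in K ->
     ~~ ci T Indep y (S' :\ y)) -> K \subset Sout.
Proof.
elim=> // {}S X {}Sout XS ciX _ IH KS depK.
have XK : X \notin K by apply: contraL ciX => /(depK S X (subxx S) KS).
apply: IH => [|S' y S'S]; first by rewrite subsetD1 KS XK.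
by apply: depK; apply: subset_trans S'S (subD1set _ _).
Qed.

End Algorithm.

Section Faithful.
Variables (V : finType) (T : V) (Indep : {set V} -> {set V} -> {set V} -> bool).
Variable edge : rel V.
Hypothesis edge_acyclic : acyclic edge.
Hypothesis Indep_d_separated : forall X Y Z : {set V},
  [disjoint X & Y] -> [disjoint X & Z] -> [disjoint Y & Z] ->
  (Indep X Y Z <-> d_separated edge X Y Z).

Local Notation pc := (pc_set edge T).
Local Notation mb := (mb_set edge T).

Lemma ci_d_separated (Z : {set V}) y : y != T -> y \notin Z -> T \notin Z ->
  ci T Indep y Z <-> ~ d_connected edge Z y T.
Proof.
move=> neq_yT yZ TZ.
apply: iff_trans (Indep_d_separated _ _ _) _; rewrite ?disjoints1 ?inE //.
split=> [sep | nconn x t /set1P-> /set1P->]; last exact: nconn.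
exact: sep (set11 y) (set11 T).
Qed.

Lemma pc_not_ci (Z : {set V}) y : y \in pc -> y \notin Z -> T \notin Z ->
  ~~ ci T Indep y Z.
Proof.
move=> ypc yZ TZ; have neq_yT := pc_neq edge_acyclic ypc.
apply/negP => /(ci_d_separated neq_yT yZ TZ); apply.
by apply: adj_d_connected; rewrite inE in ypc.
Qed.

Lemma mb_not_ci (Z : {set V}) y : y \in mb -> y \notin Z -> T \notin Z ->
  pc :\ y \subset Z -> ~~ ci T Indep y Z.
Proof.
rewrite inE => /andP[neq_yT ymb] yZ TZ pcZ.
apply/negP => /(ci_d_separated neq_yT yZ TZ); apply.
case/orP: ymb => [ayT|/existsP[c /andP[eTc eyc]]]; first exact: adj_d_connected.
apply: (collider_d_connected edge_acyclic eyc eTc _ neq_yT); apply: (subsetP pcZ).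
rewrite !inE /adj eTc orbT andbT.
by apply: contraTneq eyc => ->; rewrite (edge_irrefl edge_acyclic).
Qed.

Lemma ci_outside_mb (Z : {set V}) y : mb \subset Z -> y \notin Z -> y != T ->
  T \notin Z -> ci T Indep y Z.
Proof.
move=> mbZ yZ neq_yT TZ; apply/(ci_d_separated neq_yT yZ TZ).
exact: mb_d_separated.
Qed.

Lemma backward_to_mb S Sout : backward T Indep S Sout ->
  mb \subset S -> S \subset features T -> Sout = mb.
Proof.
elim=> [{}S depS|{}S X {}Sout XS ciX _ IH] mbS SF;
  have T_notin_SD1 Y : T \notin S :\ Y by rewrite in_setD1 (negPf (features_notT SF)) andbF.
  apply/eqP; rewrite eqEsubset mbS andbT; apply/subsetP => X XS.
  apply: contraNT (depS X XS) => Xmb; apply: ci_outside_mb.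
  - by rewrite subsetD1 mbS Xmb.
  - by rewrite setD11.
  - by move: (subsetP SF X XS); rewrite !inE.
  - exact: T_notin_SD1.
have Xmb : X \notin mb.
  apply: contraL ciX => Xmb; apply: mb_not_ci => //.
  - by rewrite setD11.
  - exact: setSD (subset_trans (pc_sub_mb edge_acyclic T) mbS).
apply: IH; first by rewrite subsetD1 mbS Xmb.
exact: subset_trans (subD1set _ _) SF.
Qed.

Lemma run_from_set0 S : run T Indep set0 S ->
  pc \subset S /\ S \subset features T.
Proof.
case=> S1 [fwd bwd].
have S1F := forward_sub_features fwd (sub0set _) (subsetDl _ _).
split; last exact: subset_trans (backward_sub bwd) S1F.
have pcS1 : pc \subset S1.
  apply: (forward_keeps fwd).
  - by move=> Z y _ TZ ypc yZ; apply: pc_not_ci.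
  - by apply/subsetP => y ypc; rewrite !inE (pc_neq edge_acyclic ypc).
  - by rewrite inE.
  - exact: subsetDl.
apply: (backward_keeps bwd pcS1) => Z y ZS1 _ ypc.
apply: pc_not_ci => //; first by rewrite setD11.
by rewrite in_setD1 (negPf (features_notT (subset_trans ZS1 S1F))) andbF.
Qed.

Lemma run_to_mb S S' : run T Indep S S' ->
  S \subset features T -> pc \subset S -> S' = mb.
Proof.
case=> S1 [fwd bwd] SF pcS.
apply: (backward_to_mb bwd); last exact: forward_sub_features fwd SF (subsetDl _ _).
apply: (forward_keeps fwd).
- move=> Z y SZ TZ ymb yZ; apply: mb_not_ci => //.
  exact: subset_trans (subD1set _ _) (subset_trans pcS SZ).
- apply/subsetP => y ymb; rewrite in_setU in_setD.
  by case: (y \in S) => //=; apply: (subsetP (mb_sub_features edge T)).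
- exact: features_notT SF.
- exact: subsetDl.
Qed.

Lemma mb_property_d_separated (S : {set V}) : T \notin S ->
  mb_property T Indep S <-> d_separated edge (~: (T |: S)) [set T] S.
Proof.
move=> TS; apply: Indep_d_separated; rewrite disjoint_subset;
  apply/subsetP => z; rewrite !inE ?negb_or.
- by case/andP.
- by case/andP.
- by move/eqP->.
Qed.

Lemma mb_set_markov_blanket : markov_blanket T Indep mb.
Proof.
have Tmb : T \notin mb := features_notT (mb_sub_features edge T).
split; first exact: mb_sub_features.
  apply/(mb_property_d_separated Tmb) => x t.
  rewrite in_setC in_setU1 negb_or => /andP[neq_xT xmb] /set1P->.
  exact: (mb_d_separated edge_acyclic (subxx mb) xmb neq_xT).
move=> S /properP[Smb [y ymb yS]].
have TS : T \notin S := contra (subsetP Smb T) Tmb.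
apply/negP => /(mb_property_d_separated TS) sep.
have nconn x : x != T -> x \notin S -> ~ d_connected edge S x T.
  by move=> neq_xT xS; apply: sep; rewrite !inE ?negb_or ?neq_xT.
move: ymb; rewrite inE => /andP[neq_yT /orP[ayT|/existsP[c /andP[eTc eyc]]]].
  exact: nconn neq_yT yS (adj_d_connected edge_acyclic _ ayT).
have [cS|cS] := boolP (c \in S).
  exact: nconn neq_yT yS (collider_d_connected edge_acyclic eyc eTc cS neq_yT).
apply: nconn cS (adj_d_connected edge_acyclic _ _); last by rewrite /adj eTc orbT.
by apply: contraTneq eTc => ->; rewrite (edge_irrefl edge_acyclic).
Qed.

End Faithful.

Theorem theorem1 (V : finType) (T : V)
    (Indep : {set V} -> {set V} -> {set V} -> bool) :
  faithful_BN Indep ->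
  (exists Sout, pfbp T Indep 2 set0 Sout) /\
  (forall Sout, pfbp T Indep 2 set0 Sout -> markov_blanket T Indep Sout).
Proof.
case=> edge [acyc faith]; split; first exact: pfbp_total.
move=> Sout [S1 [run1 halt1]].
have [pcS1 S1F] := run_from_set0 acyc faith run1.
suff -> : Sout = mb_set edge T by exact: mb_set_markov_blanket.
case: eqP halt1 => [S1_0 ->|_ /= [S2 [run2 halt2]]].
  by subst S1; exact: (run_to_mb acyc faith run1 (sub0set _) pcS1).
have S2mb := run_to_mb acyc faith run2 S1F pcS1.
by case: eqP halt2 => [<- | _] ->.
Qed.
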